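(* Let $E$ be a Banach $f$-algebra and let $(x_n)$ be a sequence in $E$ which is disjoint ($|x_n|\wedge|x_m|=0$ for $n\neq m$) and decreasing. Then $x_n\xrightarrow{mw}0$.
   Context: All vector lattices are real and Archimedean. An $f$-algebra is a vector lattice with an associative multiplication making it an algebra, such that products of positive elements are positive and $x\wedge y=0$ implies $(xz)\wedge y=(zx)\wedge y=0$ for all $z\ge0$. A Banach $f$-algebra is an $f$-algebra which is a Banach lattice with $\|xy\|\le\|x\|\|y\|$. A net $(x_\alpha)$ in $E$ $mw$-converges to $x$ ($x_\alpha\xrightarrow{mw}x$) if $|x_\alpha-x|u\to0$ weakly for every $u\in E_+$. *)

From HB Require Import structures.
From mathcomp Require Import all_boot all_order all_algebra.
From mathcomp Require Import all_classical all_reals all_analysis.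
Set Implicit Arguments. Unset Strict Implicit. Unset Printing Implicit Defensive.
Import Order.TTheory GRing.Theory Num.Theory.
Import numFieldNormedType.Exports.
Local Open Scope ring_scope.
Local Open Scope classical_set_scope.

Record vector_lattice (R : realType) (E : lmodType R) := VectorLattice {
  vle : E -> E -> Prop;
  vmeet : E -> E -> E;
  vjoin : E -> E -> E;
  vle_refl : forall x, vle x x;
  vle_trans : forall x y z, vle x y -> vle y z -> vle x z;
  vle_anti : forall x y, vle x y -> vle y x -> x = y;
  vle_add : forall x y z, vle x y -> vle (x + z) (y + z);
  vle_scale : forall (a : R) x y, 0 <= a -> vle x y -> vle (a *: x) (a *: y);
  vmeet_lb1 : forall x y, vle (vmeet x y) x;
  vmeet_lb2 : forall x y, vle (vmeet x y) y;
  vmeet_glb : forall x y z, vle z x -> vle z y -> vle z (vmeet x y);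
  vjoin_ub1 : forall x y, vle x (vjoin x y);
  vjoin_ub2 : forall x y, vle y (vjoin x y);
  vjoin_lub : forall x y z, vle x z -> vle y z -> vle (vjoin x y) z;
  varchimedean : forall x y, vle 0 x ->
    (forall n : nat, vle (n%:R *: x) y) -> x = 0
}.

Definition vabs (R : realType) (E : lmodType R) (L : vector_lattice E) (x : E) : E :=
  vjoin L x (- x).

Record banach_f_algebra (R : realType) (E : completeNormedModType R) :=
  BanachFAlgebra {
  bf_lattice :> vector_lattice E;
  bf_lattice_norm : forall x y : E,
    vle bf_lattice (vabs bf_lattice x) (vabs bf_lattice y) -> `|x| <= `|y|;
  bf_mul : E -> E -> E;
  bf_mulA : forall x y z, bf_mul x (bf_mul y z) = bf_mul (bf_mul x y) z;
  bf_mulDl : forall x y z, bf_mul (x + y) z = bf_mul x z + bf_mul y z;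
  bf_mulDr : forall x y z, bf_mul x (y + z) = bf_mul x y + bf_mul x z;
  bf_mulZl : forall (a : R) x y, bf_mul (a *: x) y = a *: bf_mul x y;
  bf_mulZr : forall (a : R) x y, bf_mul x (a *: y) = a *: bf_mul x y;
  bf_mul_pos : forall x y, vle bf_lattice 0 x -> vle bf_lattice 0 y ->
    vle bf_lattice 0 (bf_mul x y);
  bf_f_prop : forall x y z, vmeet bf_lattice x y = 0 -> vle bf_lattice 0 z ->
    vmeet bf_lattice (bf_mul x z) y = 0 /\ vmeet bf_lattice (bf_mul z x) y = 0;
  bf_norm_mul : forall x y, `|bf_mul x y| <= `|x| * `|y|
}.

Definition weak_cvg (R : realType) (E : normedModType R) (y : nat -> E) (l : E) : Prop :=
  forall f : E -> R,
    (forall a b, f (a + b) = f a + f b) ->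
    (forall (c : R) a, f (c *: a) = c * f a) ->
    continuous f ->
    (fun n => f (y n)) @ \oo --> f l.

Definition mw_cvg (R : realType) (E : completeNormedModType R)
    (A : banach_f_algebra E) (x : nat -> E) (l : E) : Prop :=
  forall u : E, vle A 0 u ->
    weak_cvg (fun n => bf_mul A (vabs A (x n - l)) u) 0.

(* In a vector lattice, if a <= b <= c and |b| is disjoint from both |a| and
   |c|, then b \/ 0 <= |b| /\ |c| = 0 and (-b) \/ 0 <= |a| /\ |b| = 0, so b = 0.
   Every term x_(n+1) of a disjoint decreasing sequence sits between x_(n+2)
   and x_n, hence vanishes; the sequences |x_n| u are then eventually zero and
   converge weakly to 0 trivially. *)
From HB Require Import structures.
From mathcomp Require Import all_boot all_order all_algebra.
From mathcomp Require Import all_classical all_reals all_analysis.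
Set Implicit Arguments. Unset Strict Implicit. Unset Printing Implicit Defensive.
Import Order.TTheory GRing.Theory Num.Theory.
Import numFieldNormedType.Exports.
Local Open Scope ring_scope.
Local Open Scope classical_set_scope.

Section VectorLatticeDisjoint.
Variables (R : realType) (E : lmodType R) (L : vector_lattice E).

Lemma vle_opp (a b : E) : vle L a b -> vle L (- b) (- a).
Proof.
move=> le_ab; have := vle_add (- a - b) le_ab.
by rewrite addrA subrr add0r addrCA subrr addr0.
Qed.

Lemma vle_oppl0 (a : E) : vle L (- a) 0 -> vle L 0 a.
Proof. by move/vle_opp; rewrite opprK oppr0. Qed.

Lemma vabs_ge0 (a : E) : vle L 0 (vabs L a).
Proof.
have le_sub : vle L 0 (vabs L a - a).
  by have := vle_add (- a) (vjoin_ub1 L a (- a)); rewrite subrr.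
have le_add : vle L 0 (vabs L a + a).
  by have := vle_add a (vjoin_ub2 L a (- a)); rewrite addNr.
have le_sum : vle L 0 ((vabs L a - a) + (vabs L a + a)).
  apply: vle_trans le_add _.
  by have := vle_add (vabs L a + a) le_sub; rewrite add0r.
rewrite [_ + _](_ : _ = 2 *: vabs L a) in le_sum; last first.
  by rewrite scaler_nat mulr2n addrACA addNr addr0.
have half_ge0 : 0 <= 2^-1 :> R by rewrite invr_ge0.
have := vle_scale half_ge0 le_sum.
by rewrite scaler0 scalerA mulVf ?pnatr_eq0 // scale1r.
Qed.

Lemma vabs0 : vabs L 0 = 0.
Proof.
rewrite /vabs oppr0; apply: vle_anti; last exact: vjoin_ub1.
by apply: vjoin_lub; apply: vle_refl.
Qed.

Lemma disjoint_vle_le0 (a b : E) :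
  vle L a b -> vmeet L (vabs L a) (vabs L b) = 0 -> vle L a 0.
Proof.
move=> le_ab disj_ab; apply: (vle_trans (vjoin_ub1 L a 0)).
rewrite -[X in vle _ _ X]disj_ab.
apply: vmeet_glb; apply: vjoin_lub; try exact: vabs_ge0.
  exact: vjoin_ub1.
exact: vle_trans le_ab (vjoin_ub1 _ _ _).
Qed.

Lemma disjoint_vle_ge0 (a b : E) :
  vle L a b -> vmeet L (vabs L a) (vabs L b) = 0 -> vle L 0 b.
Proof.
move=> le_ab disj_ab; apply: vle_oppl0.
apply: (vle_trans (vjoin_ub1 L (- b) 0)).
rewrite -[X in vle _ _ X]disj_ab.
apply: vmeet_glb; apply: vjoin_lub; try exact: vabs_ge0.
  exact: vle_trans (vle_opp le_ab) (vjoin_ub2 _ _ _).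
exact: vjoin_ub2.
Qed.

Lemma disjoint_between_eq0 (a b c : E) : vle L a b -> vle L b c ->
  vmeet L (vabs L a) (vabs L b) = 0 -> vmeet L (vabs L b) (vabs L c) = 0 ->
  b = 0.
Proof.
move=> le_ab le_bc disj_ab disj_bc.
exact: vle_anti (disjoint_vle_le0 le_bc disj_bc) (disjoint_vle_ge0 le_ab disj_ab).
Qed.

Lemma disjoint_nonincreasing_eq0 (x : nat -> E) :
  (forall n m : nat, n <> m -> vmeet L (vabs L (x n)) (vabs L (x m)) = 0) ->
  (forall n : nat, vle L (x n.+1) (x n)) ->
  forall n, x n.+1 = 0.
Proof.
move=> disj dec n; apply: disjoint_between_eq0 (dec n.+1) (dec n) _ _.
  by apply: disj => /eqP; rewrite eqSS (gtn_eqF (ltnSn n)).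
by apply: disj => /eqP; rewrite (gtn_eqF (ltnSn n)).
Qed.

End VectorLatticeDisjoint.

Lemma bf_mul0l (R : realType) (E : completeNormedModType R)
    (A : banach_f_algebra E) (u : E) : bf_mul A 0 u = 0.
Proof. by have := bf_mulZl A 0 0 u; rewrite !scale0r. Qed.

Lemma near_eq_weak_cvg (R : realType) (E : normedModType R)
    (y : nat -> E) (l : E) :
  (\forall n \near \oo, y n = l) -> weak_cvg y l.
Proof.
move=> [N _ eq_yl] f _ _ _; apply: cvg_near_cst.
by exists N => // n /eq_yl ->.
Qed.

Theorem lemma2p3 (R : realType) (E : completeNormedModType R)
    (A : banach_f_algebra E) (x : nat -> E) :
  (forall n m : nat, n <> m -> vmeet A (vabs A (x n)) (vabs A (x m)) = 0) ->
  (forall n : nat, vle A (x n.+1) (x n)) ->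
  mw_cvg A x 0.
Proof.
move=> disj dec u _; apply: near_eq_weak_cvg; exists 1%N => // -[|n] //= _.
by rewrite (disjoint_nonincreasing_eq0 disj dec) subrr vabs0 bf_mul0l.
Qed.
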